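(* For Lebesgue almost every $x\in[0,1]$ and for every $i\in\mathbb{N}$, $$\nu_i(x)=\lim_{n\to\infty}\frac{N_i(x,n)}{n}$$ exists and equals $0$.
   Context: Every irrational $x\in(0,1)$ has a unique representation ($\bar O^1$-expansion) $$x=\sum_{k=1}^\infty\frac{(-1)^{k-1}}{g_1(g_1+g_2)\cdots(g_1+g_2+\dots+g_k)},\qquad g_k=g_k(x)\in\mathbb{N}=\{1,2,3,\dots\}.$$ The $g_k(x)$ are the $\bar O^1$-symbols of $x$. For $i,n\in\mathbb{N}$, $N_i(x,n)$ is the number of indices $k\in\{1,\dots,n\}$ with $g_k(x)=i$, and $\nu_i(x)$ (the asymptotic frequency of the symbol $i$) is the limit of $N_i(x,n)/n$ when it exists. *)

From HB Require Import structures.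
From mathcomp Require Import all_boot all_order all_algebra.
From mathcomp Require Import all_classical all_reals all_analysis.
Set Implicit Arguments. Unset Strict Implicit. Unset Printing Implicit Defensive.
Import Order.TTheory GRing.Theory Num.Theory.
Import numFieldNormedType.Exports.
Local Open Scope ring_scope.
Local Open Scope classical_set_scope.

(* Symbols are indexed from 0: g k here is g_{k+1}(x) of the paper. *)

Definition O1_partial (R : realType) (g : nat -> nat) (n : nat) : R :=
  \sum_(k < n) ((-1) ^+ k / \prod_(j < k.+1) (\sum_(l < j.+1) g l)%:R).

Definition is_O1_expansion (R : realType) (x : R) (g : nat -> nat) : Prop :=
  (forall k, (0 < g k)%N) /\ (O1_partial R g @ \oo --> x).

Definition Ncount (g : nat -> nat) (i n : nat) : nat :=
  \sum_(k < n) (g k == i).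

(** Put t_j := g_0 + ... + g_j.  An O-bar^1 expansion of x is then exactly a
    Pierce expansion x = 1/t_0 - 1/(t_0 t_1) + 1/(t_0 t_1 t_2) - ... with
    0 < t_0 < t_1 < ..., and the map x |-> 1 - t_0 x sends it to the expansion
    with digits t_1, t_2, ...  Every irrational x in (0,1) has such an expansion
    (take t_0 = floor (1/x) and iterate).  Pulling back intervals along these
    maps, which divide Lebesgue measure by t_0, covers the points whose n-th
    symbol equals M by a set of measure at most 2^-(n+1).  By Borel-Cantelli,
    almost every x has each symbol only finitely often, so N_i(x,n) stays
    bounded and N_i(x,n)/n tends to 0. *)

From HB Require Import structures.
From mathcomp Require Import all_boot all_order all_algebra.
From mathcomp Require Import all_classical all_reals all_analysis.
From mathcomp Require Import measurable_realfun ring lra zify.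
Import Order.TTheory GRing.Theory Num.Theory.
Import numFieldNormedType.Exports.
Local Open Scope ring_scope.
Local Open Scope classical_set_scope.
Set Implicit Arguments. Unset Strict Implicit. Unset Printing Implicit Defensive.

Definition pierce_sum (R : realType) (q : nat -> nat) (n : nat) : R :=
  \sum_(k < n) ((-1) ^+ k / \prod_(j < k.+1) (q j)%:R).

Definition pierce_seq (q : nat -> nat) : Prop :=
  (0 < q 0)%N /\ forall k, (q k < q k.+1)%N.

Lemma pierce_seq_shift q : pierce_seq q -> pierce_seq (fun k => q k.+1).
Proof. by move=> [q0 qI]; split=> [|k]; [exact: ltn_trans q0 (qI 0)|exact: qI]. Qed.

Lemma pierce_seq_gt q k : pierce_seq q -> (k < q k)%N.
Proof. by move=> [q0 qI]; elim: k => [|k IH] //; exact: leq_ltn_trans IH (qI k). Qed.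

Lemma pierce_seq_prod_ge q n : pierce_seq q -> (n <= \prod_(j < n) q j)%N.
Proof.
move=> qP; case: n => [|n] //; rewrite big_ord_recr /= -[n.+1]mul1n.
rewrite leq_mul ?(pierce_seq_gt n qP) // prodn_gt0 // => j.
exact: leq_ltn_trans (leq0n j) (pierce_seq_gt j qP).
Qed.

Section PierceSum.
Context {R : realType}.
Implicit Types (q : nat -> nat) (y : R).

Lemma pierce_sumS q n :
  pierce_sum R q n.+1 = (1 - pierce_sum R (fun k => q k.+1) n) / (q 0)%:R.
Proof.
rewrite /pierce_sum big_ord_recl big_ord1 expr0 div1r mulrBl mul1r.
congr (_ + _); rewrite mulr_suml -sumrN; apply: eq_bigr => i _.
rewrite big_ord_recl exprS invfM /=; ring.
Qed.

Lemma pierce_sum_bound q n : pierce_seq q ->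
  0 <= pierce_sum R q n <= (q 0)%:R^-1.
Proof.
elim: n q => [|n IH] q qP; first by rewrite /pierce_sum big_ord0 lexx invr_ge0 ler0n.
have [q0 qI] := qP; have q1 : (0 < q 1)%N := ltn_trans q0 (qI 0).
have /andP[lo hi] := IH _ (pierce_seq_shift qP).
have q1_inv : ((q 1)%:R^-1 : R) <= 1 by rewrite invf_le1 ?ltr0n // ler1n.
have q0_pos : (0 : R) < (q 0)%:R by rewrite ltr0n.
rewrite pierce_sumS; apply/andP; split.
  by rewrite divr_ge0 // subr_ge0 (le_trans hi).
by rewrite ler_pdivrMr // mulVf ?gt_eqF //; lra.
Qed.

Lemma pierce_lim_bound q y : pierce_seq q ->
  pierce_sum R q @ \oo --> y -> 0 <= y <= (q 0)%:R^-1.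
Proof.
move=> qP cv; rewrite -(cvg_lim _ cv) //.
have cvq : cvg (pierce_sum R q @ \oo) by apply/cvg_ex; exists y.
have bnd n := pierce_sum_bound n qP.
apply/andP; split; [apply: limr_ge | apply: limr_le] => //;
  by near=> n; have /andP[] := bnd n.
Unshelve. all: by end_near.
Qed.

Lemma pierce_sum_shift_cvg q y : (0 < q 0)%N ->
  pierce_sum R q @ \oo --> y ->
  pierce_sum R (fun k => q k.+1) @ \oo --> 1 - (q 0)%:R * y.
Proof.
move=> q0 cv.
have -> : pierce_sum R (fun k => q k.+1) =
          fun n => 1 - (q 0)%:R * pierce_sum R q n.+1.
  apply/funext => n; rewrite pierce_sumS mulrCA divff ?pnatr_eq0 -?lt0n //.
  ring.
apply: cvgB; first exact: cvg_cst.
by apply: cvgMr; rewrite (cvg_shiftS (pierce_sum R q)).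
Qed.

End PierceSum.

Section AffinePreimage.
Context {R : realType}.
Local Notation mu := (@lebesgue_measure R).

Lemma measurable_fun_affine (a u : R) :
  measurable_fun [set: R] (fun x => a - u * x).
Proof.
apply: continuous_measurable_fun => x.
apply: continuousB; first exact: cvg_cst.
by apply: continuousM; [exact: cvg_cst | exact: cvg_id].
Qed.

Lemma measurable_affine_preimage (a u : R) (B : set R) : measurable B ->
  measurable ((fun x => a - u * x) @^-1` B).
Proof.
by move=> mB; rewrite -[X in measurable X]setTI; exact: measurable_fun_affine.
Qed.

Lemma lebesgue_measure_affine_preimage (a u : R) (B : set R) :
  0 < u -> measurable B ->
  mu ((fun x => a - u * x) @^-1` B) = ((u^-1)%:E * mu B)%E.
Proof.
move=> u0 mB; set f := fun x : R => a - u * x.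
suff -> : mu B = (u%:E * mu (f @^-1` B))%E.
  by rewrite muleA -EFinM mulVf ?gt_eqF // mul1e.
have nu_itv (c d : R) : mu `]c, d] = (u%:E * mu (f @^-1` `]c, d]))%E.
  have -> : f @^-1` `]c, d] = `[(a - d) / u, (a - c) / u[%classic.
    apply/seteqP; split => x /=; rewrite !in_itv /= ler_pdivrMr ?ltr_pdivlMr //;
      rewrite /f mulrC => /andP[? ?]; apply/andP; split; lra.
  rewrite !lebesgue_measure_itv /= !lte_fin ltr_pM2r ?invr_gt0 // ltrD2l ltrN2.
  case: ifP => _; last by rewrite mule0.
  by rewrite -!EFinB -EFinM -mulrBl mulrCA divff ?gt_eqF // mulr1; congr EFin; lra.
have := @lebesgue_measure_unique R
  (mscale (NngNum (ltW u0)) (pushforward mu (f : _ -> measurableTypeR R))).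
move=> /(_ (measurable_fun_affine a u)) -> //.
by move=> _ [[c d] _ <-]; exact: nu_itv.
Qed.

End AffinePreimage.

Lemma nneseries_le_partial_bound (R : realType) (f : nat -> R) (C : R) :
  (forall k, 0 <= f k) -> (forall N, \sum_(k < N) f k <= C) ->
  (\sum_(k <oo) (f k)%:E <= C%:E)%E.
Proof.
move=> f0 hC; apply: lime_le.
  by apply: is_cvg_nneseries => k _ _; rewrite lee_fin.
by near=> N; rewrite sumEFin lee_fin big_mkord.
Unshelve. all: by end_near.
Qed.

Lemma sum_inv_consecutive3_le (R : realType) (a N : nat) : (0 < a)%N ->
  \sum_(k < N) ((a + k) * (a + k).+1 * (a + k).+2)%:R^-1 <= (2 * a * a.+1)%:R^-1 :> R.
Proof.
move=> a0.
(* 1/(v(v+1)(v+2)) = 1/(2v(v+1)) - 1/(2(v+1)(v+2)) telescopes. *)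
suff <- : \sum_(k < N) ((a + k) * (a + k).+1 * (a + k).+2)%:R^-1 +
    (2 * (a + N) * (a + N).+1)%:R^-1 = (2 * a * a.+1)%:R^-1 :> R.
  by rewrite lerDl invr_ge0.
elim: N => [|N IH]; first by rewrite big_ord0 add0r addn0.
rewrite big_ord_recr /= -IH -addrA addnS; congr (_ + _).
have : (0 < a + N)%N by rewrite ltn_addr.
move: (a + N)%N => v v0.
rewrite -[v.+2]addn2 -[v.+1]addn1 !natrM !natrD.
have v0' : (0 : R) < v%:R by rewrite ltr0n.
by field; rewrite !gt_eqF //; lra.
Qed.

Section GapCover.
Context {R : realType}.
Local Notation mu := (@lebesgue_measure R).

(* If y has Pierce digits q, then 1 - q_0 y has Pierce digits q_1, q_2, ... *)
Definition pierce_shift_preimage (u : nat) (S : set R) : set R :=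
  (fun x => 1 - u%:R * x) @^-1` S.

Lemma measurable_pierce_shift_preimage u S :
  measurable S -> measurable (pierce_shift_preimage u S).
Proof. exact: measurable_affine_preimage. Qed.

Lemma lebesgue_measure_pierce_shift_preimage u S : (0 < u)%N -> measurable S ->
  mu (pierce_shift_preimage u S) = ((u%:R^-1)%:E * mu S)%E.
Proof. by move=> u0; apply: lebesgue_measure_affine_preimage; rewrite ltr0n. Qed.

(* Covers the limits y of Pierce sums of sequences q with s < q_0 and
   q_n - q_(n-1) = M, where q_(-1) := s. *)
Fixpoint gap_cover (M n s : nat) : set R :=
  if n is n'.+1 then
    \bigcup_k pierce_shift_preimage (s.+1 + k) (gap_cover M n' (s.+1 + k))
  else pierce_shift_preimage (s + M) `[0, (s + M).+1%:R^-1].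

Lemma measurable_gap_cover M n s : measurable (gap_cover M n s).
Proof.
elim: n s => [|n IH] s /=; last apply: bigcup_measurable => k _;
  by apply: measurable_pierce_shift_preimage.
Qed.

Lemma gap_cover_pierce_sum M n s (q : nat -> nat) (y : R) :
  (forall k, (q k < q k.+1)%N) -> (s < q 0)%N -> pierce_sum R q @ \oo --> y ->
  q n = (M + if n is n'.+1 then q n' else s)%N -> gap_cover M n s y.
Proof.
elim: n s q y => [|n IH] s q y qI sq cv gap /=.
  have qP : pierce_seq q by split=> //; exact: leq_ltn_trans sq.
  have /andP[lo hi] := pierce_lim_bound (pierce_seq_shift qP)
                         (pierce_sum_shift_cvg qP.1 cv).
  rewrite /pierce_shift_preimage /= addnC -gap in_itv /= lo (le_trans hi) //.
  by rewrite lef_pV2 ?posrE ?ltr0n ?ler_nat //; exact: (pierce_seq_shift qP).1.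
exists (q 0 - s.+1)%N => //; rewrite /pierce_shift_preimage /= subnKC //.
apply: (IH _ (fun k => q k.+1)) => //.
- exact: pierce_sum_shift_cvg (leq_ltn_trans (leq0n s) sq) cv.
- by rewrite gap; case: n {IH gap}.
Qed.

Lemma gap_cover_bound M n s : (0 < M)%N ->
  (mu (gap_cover M n s) <= ((2 ^ n * s.+1 * s.+2)%:R^-1)%:E)%E.
Proof.
move=> M0; elim: n s => [|n IH] s /=.
  have sM : (0 < s + M)%N by rewrite addn_gt0 M0 orbT.
  rewrite lebesgue_measure_pierce_shift_preimage //.
  rewrite lebesgue_measure_itv /= lte_fin invr_gt0 ltr0n /= oppr0 adde0 -EFinM.
  rewrite lee_fin expn0 mul1n.
  rewrite -invfM -!natrM lef_pV2 ?posrE ?ltr0n ?muln_gt0 ?sM // ler_nat.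
  by apply: leq_mul; lia.
set F := fun k => pierce_shift_preimage (s.+1 + k) (gap_cover M n (s.+1 + k)).
have mF k : measurable (F k).
  by apply: measurable_pierce_shift_preimage; exact: measurable_gap_cover.
have mUF : measurable (\bigcup_k F k) by apply: bigcup_measurable => k _.
apply: le_trans (measure_sigma_subadditive mu mF mUF (@subset_refl _ _)) _.
set f := fun k =>
  (s.+1 + k)%:R^-1 * (2 ^ n * (s.+1 + k).+1 * (s.+1 + k).+2)%:R^-1 : R.
apply: (@le_trans _ _ (\sum_(k <oo) (f k)%:E)%E).
  apply: lee_nneseries => [k _ _|k _]; first exact: measure_ge0.
  rewrite /F /= lebesgue_measure_pierce_shift_preimage //;
    last exact: measurable_gap_cover.
  by rewrite /f EFinM; apply: lee_wpmul2l; rewrite ?lee_fin ?invr_ge0.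
apply: nneseries_le_partial_bound => [k|N]; first by rewrite /f mulr_ge0 ?invr_ge0.
have -> : \sum_(k < N) f k = (2 ^ n)%:R^-1 *
    \sum_(k < N) ((s.+1 + k) * (s.+1 + k).+1 * (s.+1 + k).+2)%:R^-1.
  by rewrite mulr_sumr; apply: eq_bigr => k _; rewrite /f !natrM !invfM; ring.
have -> : (2 ^ n.+1 * s.+1 * s.+2)%:R^-1 =
    (2 ^ n)%:R^-1 * (2 * s.+1 * s.+2)%:R^-1 :> R.
  by rewrite expnS !natrM !invfM; ring.
by rewrite ler_wpM2l ?invr_ge0 // sum_inv_consecutive3_le.
Qed.

End GapCover.

Section GapCoverLimsup.
Context {R : realType}.
Local Notation mu := (@lebesgue_measure R).

Definition gap_cover_limsup (M : nat) : set R :=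
  \bigcap_N \bigcup_k gap_cover M (N + k) 0.

Lemma measurable_gap_cover_limsup M : measurable (gap_cover_limsup M).
Proof.
apply: bigcapT_measurable => N; apply: bigcup_measurable => k _.
exact: measurable_gap_cover.
Qed.

Lemma gap_cover_limsup_bound M N : (0 < M)%N ->
  (mu (gap_cover_limsup M) <= ((2 ^+ N)^-1)%:E)%E.
Proof.
move=> M0; set F := fun k => @gap_cover R M (N + k) 0.
have mF k : measurable (F k) by exact: measurable_gap_cover.
have mUF : measurable (\bigcup_k F k) by apply: bigcup_measurable => k _.
apply: (@le_trans _ _ (mu (\bigcup_k F k))).
  apply: le_measure; rewrite ?inE //; last by move=> x /(_ N I).
  exact: measurable_gap_cover_limsup.
apply: le_trans (measure_sigma_subadditive mu mF mUF (@subset_refl _ _)) _.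
rewrite -div1r -(cvg_lim _ (@cvg_geometric_eseries_half R 1 N)) //.
apply: lee_nneseries => [k _ _|k _]; first exact: measure_ge0.
apply: le_trans (gap_cover_bound _ _ M0) _.
by rewrite lee_fin div1r muln1 -expnSr addnC -addnS.
Qed.

Lemma gap_cover_limsup_null M : (0 < M)%N -> mu (gap_cover_limsup M) = 0%E.
Proof.
move=> M0; apply/le_anti/andP; split; last exact: measure_ge0.
apply/lee_addgt0Pr => e e0; rewrite add0e.
have geom0 : (fun N => (2 ^+ N)^-1 : R) @ \oo --> 0.
  under eq_fun do rewrite -exprVn.
  by apply: cvg_expr; rewrite ger0_norm ?invf_lt1 ?ltr1n.
have [N _ /(_ N (leqnn N))] := cvgr0_norm_lt _ geom0 _ e0.
rewrite ger0_norm ?invr_ge0 ?exprn_ge0 // => /ltW small.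
by apply: le_trans (gap_cover_limsup_bound N M0) _; rewrite lee_fin.
Qed.

Lemma ae_not_gap_cover_limsup M : (0 < M)%N ->
  {ae mu, forall x, ~ gap_cover_limsup M x}.
Proof.
move=> M0; exists (gap_cover_limsup M); split.
- exact: measurable_gap_cover_limsup.
- exact: gap_cover_limsup_null.
- by move=> x /= /contrapT.
Qed.

End GapCoverLimsup.

Section PierceAlgorithm.
Context {R : realType}.
Implicit Types (x y : R).

Definition pierce_digit y : nat := Num.trunc y^-1.

Definition pierce_map y : R := 1 - (pierce_digit y)%:R * y.

Lemma pierce_digit_spec y : 0 < y < 1 -> irrational y ->
  [/\ (0 < pierce_digit y)%N, (pierce_digit y)%:R < y^-1
    & y^-1 < (pierce_digit y).+1%:R].
Proof.
move=> /andP[y0 y1] iy; set d := pierce_digit y.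
have /andP[dle ltd] : d%:R <= y^-1 < d.+1%:R.
  by apply: truncn_itv; rewrite invr_ge0 ltW.
split => //; first by rewrite truncn_gt0 ltW // invf_gt1.
rewrite lt_neqAle dle andbT; apply: contra_notN iy => /eqP dE.
by exists (d%:R^-1) => //; rewrite fmorphV rmorph_nat dE invrK.
Qed.

Lemma pierce_map_spec y : 0 < y < 1 -> irrational y ->
  [/\ 0 < pierce_map y < 1, irrational (pierce_map y)
    & (pierce_digit y < pierce_digit (pierce_map y))%N].
Proof.
move=> y01 iy; have [d0 dlt ltd] := pierce_digit_spec y01 iy.
move: y01 => /andP[y0 y1]; rewrite /pierce_map.
set d := pierce_digit y in dlt ltd d0 *; set y' := 1 - d%:R * y.
have D1 : 1 <= d%:R :> R by rewrite ler1n.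
have dy1 : d%:R * y < 1 by rewrite -ltr_pdivlMr // div1r.
have dy2 : 1 < (d%:R + 1) * y by rewrite -ltr_pdivrMr // div1r natr1.
have y'0 : 0 < y' by rewrite subr_gt0.
have y'1 : y' < 1 by rewrite gtrBl mulr_gt0 // (lt_le_trans ltr01).
have y'd : (d%:R + 1) * y' < 1.
  have : 0 < d%:R * ((d%:R + 1) * y - 1).
    by rewrite mulr_gt0 ?subr_gt0 // (lt_le_trans ltr01 D1).
  by rewrite /y'; nra.
split; first by apply/andP.
- move=> [q _ qE]; apply: iy; exists ((1 - q) / d%:R) => //.
  have -> : ratr ((1 - q) / d%:R) = (1 - ratr q) / d%:R :> R.
    by rewrite fmorph_div rmorphB rmorph1 rmorph_nat.
  rewrite qE /y'.
  by field; rewrite gt_eqF // (lt_le_trans ltr01 D1).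
- rewrite /pierce_digit truncn_gt_nat -natr1; apply: ltW.
  by rewrite -(ltr_pM2r y'0) mulVf ?gt_eqF.
Qed.

End PierceAlgorithm.

Section PierceExpansion.
Context {R : realType}.
Variable x : R.
Hypotheses (x01 : 0 < x < 1) (irr_x : irrational x).

Definition pierce_digits k : nat := pierce_digit (iter k pierce_map x).

Lemma pierce_iter_spec k :
  0 < iter k pierce_map x < 1 /\ irrational (iter k pierce_map x).
Proof.
elim: k => [|k [y01 iy]]; first by split.
by have [] := pierce_map_spec y01 iy.
Qed.

Lemma pierce_seq_digits : pierce_seq pierce_digits.
Proof.
split=> [|k].
  by have [y01 iy] := pierce_iter_spec 0; have [] := pierce_digit_spec y01 iy.
by have [y01 iy] := pierce_iter_spec k; have [] := pierce_map_spec y01 iy.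
Qed.

Lemma pierce_sum_digits_error n :
  x - pierce_sum R pierce_digits n =
  (-1) ^+ n * iter n pierce_map x / \prod_(j < n) (pierce_digits j)%:R.
Proof.
elim: n => [|n IH]; first by rewrite /pierce_sum !big_ord0 subr0 expr0 mul1r divr1.
have q_neq0 j : (pierce_digits j)%:R != 0 :> R.
  by rewrite pnatr_eq0 -lt0n (leq_ltn_trans _ (pierce_seq_gt j pierce_seq_digits)).
rewrite /pierce_sum big_ord_recr /= opprD addrA -/(pierce_sum R _ n) IH.
rewrite big_ord_recr /=.
rewrite /pierce_digits /=.
rewrite /pierce_map exprS; field.
apply/andP; split; first exact: q_neq0 n.
by rewrite prodf_seq_neq0; apply/allP => j _; exact: q_neq0 j.
Qed.

Lemma pierce_sum_digits_cvg : pierce_sum R pierce_digits @ \oo --> x.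
Proof.
have err n : `|x - pierce_sum R pierce_digits n.+1| <= n.+1%:R^-1.
  have [/andP[r0 r1] _] := pierce_iter_spec n.+1.
  have P_ge : n.+1%:R <= \prod_(j < n.+1) (pierce_digits j)%:R :> R.
    by rewrite -natr_prod ler_nat; exact: pierce_seq_prod_ge pierce_seq_digits.
  have P_gt0 : 0 < \prod_(j < n.+1) (pierce_digits j)%:R :> R.
    exact: lt_le_trans P_ge.
  rewrite pierce_sum_digits_error -mulrA normrM normrX normrN1 expr1n mul1r.
  rewrite ger0_norm; last by rewrite divr_ge0 // ltW.
  apply: (@le_trans _ _ (\prod_(j < n.+1) (pierce_digits j)%:R)^-1).
    by rewrite ler_pdivrMr // mulVf ?gt_eqF // ltW.
  by rewrite lef_pV2 ?posrE ?ltr0n.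
have -> : pierce_sum R pierce_digits =
    fun n => x - (x - pierce_sum R pierce_digits n).
  by apply/funext => n; rewrite subKr.
rewrite -[X in _ --> X]subr0; apply: cvgB; first exact: cvg_cst.
apply/norm_cvg0P; rewrite -cvg_shiftS.
apply: (squeeze_cvgr _ (cvg_cst 0) cvg_harmonic).
by near=> n; rewrite normr_ge0; exact: err.
Unshelve. all: by end_near.
Qed.

End PierceExpansion.

Lemma Ncount_le (g : nat -> nat) i N n :
  (forall k, (N <= k)%N -> g k != i) -> (Ncount g i n <= N)%N.
Proof.
move=> gN; suff /leq_trans : (Ncount g i n <= minn n N)%N by apply; exact: geq_minr.
elim: n => [|n IH]; first by rewrite /Ncount big_ord0.
rewrite /Ncount big_ord_recr /= -/(Ncount g i n).
have [Nn | nN] := leqP N n; last by move: IH; case: (g n == i); lia.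
by rewrite (negbTE (gN n Nn)) addn0 (leq_trans IH) // !minnE; lia.
Qed.

Lemma Ncount_ratio_cvg0 (R : realType) (g : nat -> nat) i :
  (\forall k \near \oo, g k != i) ->
  (fun n : nat => (Ncount g i n)%:R / n%:R : R) @ \oo --> (0 : R).
Proof.
move=> [N _ gN]; rewrite -cvg_shiftS.
apply: (@squeeze_cvgr _ _ _ _ (fun => 0) (fun n => N%:R * n.+1%:R^-1)).
- near=> n; rewrite divr_ge0 //=.
  by rewrite ler_wpM2r ?invr_ge0 // ler_nat; apply: Ncount_le.
- exact: cvg_cst.
- by rewrite -(mulr0 N%:R); apply: cvgMr; exact: cvg_harmonic.
Unshelve. all: by end_near.
Qed.

Definition O1_cumulative (g : nat -> nat) (j : nat) : nat := \sum_(l < j.+1) g l.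

Section O1Expansion.
Context {R : realType}.
Implicit Types (x : R) (g : nat -> nat).

Lemma O1_partialE g : O1_partial R g = pierce_sum R (O1_cumulative g).
Proof. by []. Qed.

Lemma pierce_seq_O1_cumulative g :
  (forall k, (0 < g k)%N) -> pierce_seq (O1_cumulative g).
Proof.
move=> g0; split=> [|k]; first by rewrite /O1_cumulative big_ord1.
rewrite /O1_cumulative [X in (_ < X)%N]big_ord_recr /=.
by rewrite -[X in (X < _)%N]addn0 ltn_add2l.
Qed.

Lemma is_O1_expansion_pierce_sum x (q : nat -> nat) : pierce_seq q ->
  pierce_sum R q @ \oo --> x -> exists g, is_O1_expansion x g.
Proof.
move=> [q0 qI] cv; set g := fun k => if k is k'.+1 then (q k - q k')%N else q 0.
have gq : O1_cumulative g = q.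
  apply/funext; elim=> [|j IH]; first by rewrite /O1_cumulative big_ord1.
  rewrite /O1_cumulative big_ord_recr /= -/(O1_cumulative g j) IH.
  by rewrite /g subnKC // ltnW.
exists g; split; first by case=> [|k] //; rewrite subn_gt0.
by rewrite O1_partialE gq.
Qed.

Lemma O1_symbol_eventually_neq x g M : is_O1_expansion x g ->
  ~ gap_cover_limsup M x -> \forall k \near \oo, g k != M.
Proof.
move=> [g0 cv] xM; apply: contrapT => not_ev; apply: xM => N _.
have [k Nk /eqP gk] : exists2 k, (N <= k)%N & g k == M.
  apply: contrapT => nk; apply: not_ev; apply: filterS (nbhs_infty_ge N) => k Nk.
  by apply/negP => gk; apply: nk; exists k.
exists (k - N)%N => //; rewrite subnKC //.
have [q0 qI] := pierce_seq_O1_cumulative g0.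
apply: (gap_cover_pierce_sum qI q0 cv).
case: k {Nk} gk => [|k] gk; rewrite /O1_cumulative ?big_ord1 ?big_ord_recr /= gk ?addn0 //.
by rewrite addnC.
Qed.

End O1Expansion.

Lemma ae_irrational (R : realType) :
  {ae @lebesgue_measure R, forall x : R, irrational x}.
Proof.
exists (@rational R); split.
- apply: countable_measurable; first exact: measurable_set1.
  exact: card_le_trans (card_image_le _ _) (countableP _).
- exact: lebesgue_measure_rat.
- by move=> x /= /contrapT.
Qed.

Unset Implicit Arguments.

Theorem lemma1 (R : realType) :
  {ae (@lebesgue_measure R), forall x : R, x \in `[0, 1]%R ->
    (exists g, is_O1_expansion x g) /\
    (forall g, is_O1_expansion x g ->
       forall i : nat, (0 < i)%N ->
         (fun n : nat => (Ncount g i n)%:R / n%:R : R) @ \oo --> (0 : R))}.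
Proof.
have no_limsup :
    {ae @lebesgue_measure R, forall x, forall M, ~ gap_cover_limsup M.+1 x}.
  by apply: ae_foralln => M; exact: ae_not_gap_cover_limsup.
apply: (filterS2 (ae_filter_ringOfSetsType _) _ (ae_irrational R) no_limsup).
move=> x irr_x gap_x x01.
have x0 : x != 0 by apply: contra_notN irr_x => /eqP ->; exists 0; rewrite ?rmorph0.
have x1 : x != 1 by apply: contra_notN irr_x => /eqP ->; exists 1; rewrite ?rmorph1.
have x01' : 0 < x < 1 by move: x01; rewrite in_itv /= !lt_neqAle eq_sym x0 x1.
split; first exact: is_O1_expansion_pierce_sum (pierce_seq_digits x01' irr_x)
  (pierce_sum_digits_cvg x01' irr_x).
move=> g xg i i0; apply: Ncount_ratio_cvg0; rewrite -(prednK i0).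
exact: O1_symbol_eventually_neq xg (gap_x i.-1).
Qed.
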